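(* Let $\mathcal{X}=\{x_1,\dots,x_M\}$ and $\mathcal{Y}=\{y_1,\dots,y_N\}$ be finite sets (in this fixed enumeration), $p(x)$ a probability distribution on $\mathcal{X}$, and $c:\mathcal{X}\times\mathcal{Y}\to[0,\infty]$ a staircase nondecreasing cost function, i.e. (i) for all $1\le i<j\le M$ and all $y$, $c(x_i,y)=\infty$ implies $c(x_j,y)=\infty$; (ii) for all $1\le i<j\le N$ and all $x$, $c(x,y_i)<\infty$ implies $c(x,y_i)\le c(x,y_j)<\infty$. Assume that for every $x$ with $p(x)>0$ there is some $y$ with $c(x,y)<\infty$. For nonempty $\mathcal{S}\subseteq\mathcal{Y}$ let $\mathbf{P}_{\mathcal{S}}=\{p_{xy}\}$ be the deterministic matrix with $p_{xy}=1$ if $y=\min\big(\arg\min_{y'\in\mathcal{S}}c(x,y')\big)$ (minimum with respect to the enumeration order of $\mathcal{Y}$) and $p_{xy}=0$ otherwise, and let $\mathscr{C}(\mathcal{S})=\sum_{x,y}p(x)c(x,y)(\mathbf{P}_{\mathcal{S}})_{xy}$ (convention $0\cdot\infty=0$). Fix $y_0\in\arg\min_{y\in\mathcal{Y}}\mathscr{C}(\{y\})$, let $\mathcal{Y}'=\mathcal{Y}\setminus\{y_0\}$, and define the set function $f(\mathcal{A})=-\mathscr{C}(\mathcal{A}\cup\{y_0\})$ for $\mathcal{A}\subseteq\mathcal{Y}'$. Then $f$ is submodular on the subsets of $\mathcal{Y}'$.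
   Context: A set function $f$ on subsets of a finite set $\mathcal{Y}'$ is submodular if $f(\mathcal{A}\cup\{b\})+f(\mathcal{A}\cup\{c\})\ge f(\mathcal{A}\cup\{b,c\})+f(\mathcal{A})$ for all $\mathcal{A}\subseteq\mathcal{Y}'$ and distinct $b,c\in\mathcal{Y}'\setminus\mathcal{A}$ (equivalently, $f(\mathcal{A})+f(\mathcal{B})\ge f(\mathcal{A}\cup\mathcal{B})+f(\mathcal{A}\cap\mathcal{B})$ for all $\mathcal{A},\mathcal{B}$). *)

From mathcomp Require Import all_boot all_order all_algebra.
From mathcomp Require Import reals constructive_ereal.
Set Implicit Arguments. Unset Strict Implicit. Unset Printing Implicit Defensive.
Import Order.TTheory GRing.Theory Num.Theory.
Local Open Scope ring_scope.
Local Open Scope ereal_scope.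

Section Defs.
Variables (R : realType) (M N : nat).
Variable c : 'I_M -> 'I_N -> \bar R.

Definition argmin_set (S : {set 'I_N}) (x : 'I_M) : {set 'I_N} :=
  [set y in S | [forall y' in S, c x y <= c x y']].

Definition sel (S : {set 'I_N}) (x : 'I_M) : option 'I_N :=
  [pick y in argmin_set S x | [forall y' in argmin_set S x, (y <= y')%N]].

Definition Pmat (S : {set 'I_N}) (x : 'I_M) (y : 'I_N) : bool := sel S x == Some y.

(* expected cost C(S) = sum_{x,y} p(x) c(x,y) (P_S)_{xy}; in \bar R, 0 * +oo = 0 *)
Definition Ccost (p : 'I_M -> R) (S : {set 'I_N}) : \bar R :=
  \sum_(x < M) \sum_(y < N) ((p x)%:E * c x y * ((Pmat S x y)%:R)%:E).
End Defs.

Definition submodular_on (R : realType) (T : finType) (Y' : {set T})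
    (f : {set T} -> \bar R) : Prop :=
  forall (A : {set T}) (b c : T), A \subset Y' ->
    b \in Y' :\: A -> c \in Y' :\: A -> b != c ->
    f (A :|: [set b]) + f (A :|: [set c]) >= f (A :|: [set b; c]) + f A.

From mathcomp Require Import all_boot all_order all_algebra.
From mathcomp Require Import reals constructive_ereal.
Set Implicit Arguments.
Unset Strict Implicit.
Unset Printing Implicit Defensive.
Import Order.TTheory GRing.Theory Num.Theory.
Local Open Scope ring_scope.
Local Open Scope ereal_scope.

(** For each source letter x, the deterministic channel P_S pays p(x) times
    the least cost c(x, y) over y in S, whatever the tie-breaking rule.  The
    minimum over a set is supermodular: the minimiser over A ∪ {b, d} lies in
    A ∪ {b} or in A ∪ {d}, and the other of these two sets still contains A.
    Summing over x shows that C is supermodular on sets containing y0, and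
    negating (C takes values in [0, +oo]) gives the submodularity of f. *)

Section ArgminSelection.
Variables (R : realType) (M N : nat) (c : 'I_M -> 'I_N -> \bar R).
Implicit Types (A S : {set 'I_N}) (x : 'I_M) (b d y ya yb yd ye : 'I_N).

Lemma argmin_set_mem S x y : y \in argmin_set c S x -> y \in S.
Proof. by rewrite inE => /andP[]. Qed.

Lemma argmin_set_min S x y (y' : 'I_N) :
  y \in argmin_set c S x -> y' \in S -> c x y <= c x y'.
Proof. by rewrite inE => /andP[_ /forall_inP]; apply. Qed.

Lemma sel_argmin S x (y1 : 'I_N) : y1 \in S ->
  exists y, sel c S x = Some y /\ y \in argmin_set c S x.
Proof.
move=> Sy1; have [ym Sym ym_min] := arg_minP (c x) Sy1.
have Aym : ym \in argmin_set c S x.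
  by rewrite inE; apply/andP; split => //; apply/forall_inP.
have [yn Ayn yn_min] := arg_minnP val Aym.
rewrite /sel; case: pickP => [y /andP[Ay _] | none]; first by exists y.
by move/negbT: (none yn) => /nandP[] /negP[] //; apply/forall_inP.
Qed.

Lemma argmin_set_antimono S (S' : {set 'I_N}) x y (y' : 'I_N) :
  S \subset S' -> y \in argmin_set c S x -> y' \in argmin_set c S' x ->
  c x y' <= c x y.
Proof.
move=> sSS' Ay Ay'; apply: argmin_set_min Ay' _.
exact: (subsetP sSS') _ (argmin_set_mem Ay).
Qed.

Lemma argmin_set_supermodular A b d x ya yb yd ye :
  ya \in argmin_set c A x -> yb \in argmin_set c (b |: A) x ->
  yd \in argmin_set c (d |: A) x -> ye \in argmin_set c (b |: (d |: A)) x ->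
  c x yb + c x yd <= c x ye + c x ya.
Proof.
move=> Aya Ayb Ayd Aye.
have Ab : A \subset b |: A by exact: subsetUr.
have Ad : A \subset d |: A by exact: subsetUr.
have := argmin_set_mem Aye; rewrite !inE => /or3P[/eqP ye_b | /eqP ye_d | Aye'].
- apply: leeD; last exact: argmin_set_antimono Ad Aya Ayd.
  by apply: argmin_set_min Ayb _; rewrite ye_b setU11.
- rewrite addeC; apply: leeD; last exact: argmin_set_antimono Ab Aya Ayb.
  by apply: argmin_set_min Ayd _; rewrite ye_d setU11.
- apply: leeD; last exact: argmin_set_antimono Ad Aya Ayd.
  by apply: argmin_set_min Ayb _; rewrite setU1r.
Qed.

End ArgminSelection.

(* The bounds keep X and Y from being opposite infinities: +oo + -oo = -oo. *)
Lemma oppe_supermodular (R : realDomainType) (X Y Z W : \bar R) :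
  0 <= Z -> Z <= X -> X <= W -> Y <= W -> X + Y <= Z + W ->
  - Z - W <= - X - Y.
Proof.
move=> Z0 ZX XW YW sumXY.
have X0 : 0 <= X := le_trans Z0 ZX.
case: W XW YW sumXY => [w | | ] XW YW sumXY.
- have Xlty : X < +oo := le_lt_trans XW (ltry w).
  have finX : X \is a fin_num by rewrite ge0_fin_numE.
  have finZ : Z \is a fin_num by rewrite ge0_fin_numE // (le_lt_trans ZX).
  case: Y YW sumXY => [y | | ] // YW sumXY.
    by rewrite -!oppeD ?fin_num_adde_defl // leeN2.
  by rewrite [- -oo]/= addey ?leey //; case: (X) finX.
- by rewrite [- +oo]/= addeNy leNye.
- by move: (le_trans X0 XW).
Qed.

Section ExpectedCost.
Variables (R : realType) (M N : nat) (c : 'I_M -> 'I_N -> \bar R).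
Variable p : 'I_M -> R.
Hypothesis p_ge0 : forall x, (0 <= p x)%R.
Hypothesis c_ge0 : forall x y, 0 <= c x y.
Implicit Types (A S : {set 'I_N}) (x : 'I_M) (b d y : 'I_N).

Definition row_cost S x : \bar R :=
  \sum_(y < N) ((p x)%:E * c x y * ((Pmat c S x y)%:R)%:E).

Lemma Ccost_row S : Ccost c p S = \sum_(x < M) row_cost S x.
Proof. by []. Qed.

Lemma row_cost_sel S x y :
  sel c S x = Some y -> row_cost S x = (p x)%:E * c x y.
Proof.
move=> selS; rewrite /row_cost (bigD1 y) //= big1 => [|y' y'y].
  by rewrite /Pmat selS eqxx mule1 adde0.
by rewrite /Pmat selS (inj_eq Some_inj) eq_sym (negbTE y'y) mule0.
Qed.

Lemma row_cost_ge0 S x : 0 <= row_cost S x.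
Proof.
by apply: sume_ge0 => y _; rewrite !mule_ge0 ?lee_fin //; case: (Pmat _ _ _ _).
Qed.

Lemma Ccost_ge0 S : 0 <= Ccost c p S.
Proof. by apply: sume_ge0 => x _; exact: row_cost_ge0. Qed.

Lemma Ccost_antimono S (S' : {set 'I_N}) (y0 : 'I_N) :
  y0 \in S -> S \subset S' -> Ccost c p S' <= Ccost c p S.
Proof.
move=> Sy0 sSS'; rewrite !Ccost_row; apply: lee_sum => x _.
have [y [selS AyS]] := sel_argmin c x Sy0.
have [y' [selS' AyS']] := sel_argmin c x (subsetP sSS' _ Sy0).
rewrite (row_cost_sel selS) (row_cost_sel selS').
by apply: lee_wpmul2l; rewrite ?lee_fin //; exact: argmin_set_antimono AyS AyS'.
Qed.

Lemma Ccost_supermodular A b d (y0 : 'I_N) : y0 \in A ->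
  Ccost c p (b |: A) + Ccost c p (d |: A) <=
  Ccost c p (b |: (d |: A)) + Ccost c p A.
Proof.
move=> Ay0; rewrite !Ccost_row -!big_split /=; apply: lee_sum => x _.
have [ya [sela Aya]] := sel_argmin c x Ay0.
have [yb [selb Ayb]] := sel_argmin c x (setU1r b Ay0).
have [yd [seld Ayd]] := sel_argmin c x (setU1r d Ay0).
have [ye [sele Aye]] := sel_argmin c x (setU1r b (setU1r d Ay0)).
rewrite (row_cost_sel sela) (row_cost_sel selb) (row_cost_sel seld).
rewrite (row_cost_sel sele) -!muleDr ?ge0_adde_def ?inE ?c_ge0 //.
apply: lee_wpmul2l; first by rewrite lee_fin.
exact: argmin_set_supermodular Aya Ayb Ayd Aye.
Qed.

Lemma oppe_Ccost_submodular A b d (y0 : 'I_N) : y0 \in A ->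
  - Ccost c p (b |: (d |: A)) - Ccost c p A <=
  - Ccost c p (b |: A) - Ccost c p (d |: A).
Proof.
move=> Ay0; apply: oppe_supermodular; last exact: Ccost_supermodular Ay0.
- exact: Ccost_ge0.
- by apply: Ccost_antimono (setU1r b Ay0) _; rewrite setUS // subsetUr.
- exact: Ccost_antimono Ay0 (subsetUr _ _).
- exact: Ccost_antimono Ay0 (subsetUr _ _).
Qed.

End ExpectedCost.

Theorem lemma1 (R : realType) (M N : nat) (p : 'I_M -> R)
    (c : 'I_M -> 'I_N -> \bar R) (y0 : 'I_N) :
  (forall x, (0 <= p x)%R) ->
  (\sum_(x < M) p x = 1)%R ->
  (forall x y, 0 <= c x y) ->
  (forall (i j : 'I_M), (i < j)%N -> forall y, c i y = +oo -> c j y = +oo) ->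
  (forall (i j : 'I_N), (i < j)%N -> forall x,
      c x i < +oo -> c x i <= c x j /\ c x j < +oo) ->
  (forall x, (0 < p x)%R -> exists y, c x y < +oo) ->
  (forall y, Ccost c p [set y0] <= Ccost c p [set y]) ->
  submodular_on [set~ y0] (fun A => - Ccost c p (A :|: [set y0])).
Proof.
move=> p_ge0 _ c_ge0 _ _ _ _ A b d _ _ _ _ /=.
have Ay0 : y0 \in A :|: [set y0] by rewrite !inE eqxx orbT.
have addU e : A :|: [set e] :|: [set y0] = e |: (A :|: [set y0]).
  by rewrite setUAC setUC.
have addU2 : A :|: [set b; d] :|: [set y0] = b |: (d |: (A :|: [set y0])).
  by apply/setP => y; rewrite !inE -!orbA; bool_congr.
by rewrite addU2 !addU; exact: oppe_Ccost_submodular Ay0.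
Qed.
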